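(* Let $\mathrm{pr}:\mathrm{GL}_3(A)\to\mathrm{GL}_3(\mathbb{F}_q)$ be reduction modulo $t$. For integers $0\le j\le k$, $$\mathrm{pr}(\mathrm{GL}_3(A)_{[j,k]})=\begin{cases}\mathrm{GL}_3(\mathbb{F}_q)&\text{if }0=j=k,\\ P_0&\text{if }0=j<k,\\ P_2&\text{if }0<j=k,\\ B&\text{if }0<j<k.\end{cases}$$ For a higher-dimensional simplex $w$ all of whose vertices are of the form $[j,k]$ with $0\le j\le k$, $\mathrm{pr}(\mathrm{GL}_3(A)_w)=\bigcap_{v\in w}\mathrm{pr}(\mathrm{GL}_3(A)_v)$.
   Context: Let $q$ be a prime power, $A=\mathbb{F}_q[t]$, $F_\infty=\mathbb{F}_q((1/t))$, $\pi=1/t$, $\mathcal{O}_\infty=\mathbb{F}_q[[\pi]]$. $\mathcal{B}$ is the Bruhat–Tits building of $\mathrm{PGL}_3(F_\infty)$ (vertices: homothety classes of $\mathcal{O}_\infty$-lattices in $F_\infty^3$; simplices: sets $\{v_0,\dots,v_k\}$ with representatives $L_0\supsetneq\cdots\supsetneq L_k\supsetneq\pi L_0$), with $\mathrm{GL}_3(A)$ acting by $g[L]=[gL]$; $\mathrm{GL}_3(A)_w$ is the stabilizer of $w$. $[j,k]$ is the class of the lattice spanned by $e_1,\pi^je_2,\pi^ke_3$. $B\subset\mathrm{GL}_3(\mathbb{F}_q)$ is the group of invertible upper triangular matrices; $P_0$ is the group of $(a_{rs})\in\mathrm{GL}_3(\mathbb{F}_q)$ with $a_{31}=a_{32}=0$;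 $P_2$ is the group with $a_{21}=a_{31}=0$. *)

From HB Require Import structures.
From mathcomp Require Import all_boot all_order all_algebra.
Set Implicit Arguments. Unset Strict Implicit. Unset Printing Implicit Defensive.
Import Order.TTheory GRing.Theory Num.Theory.
Local Open Scope ring_scope.

(* F is the finite field F_q; A = {poly F} = F_q[t].
   An element of F_oo = F_q((pi)), pi = 1/t, is modelled by its coefficient
   function z : int -> F (z i = coefficient of pi^i); all elements of the
   lattices considered below have support bounded below, as they should.
   A vector of F_oo^3 is a function 'I_3 -> int -> F. *)

Section Defs.
Variable F : finFieldType.

Definition vec := 'I_3 -> int -> F.
Definition lattice := vec -> Prop.

(* action of p in A = F[t] (t = pi^-1) on an element of F_oo *)
Definition polyact (p : {poly F}) (z : int -> F) : int -> F :=
  fun i => \sum_(m < size p) p`_m * z (i + (m : nat)%:Z).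

Definition mxact (g : 'M[{poly F}]_3) (x : vec) : vec :=
  fun r i => \sum_(s < 3) polyact (g r s) (x s) i.

(* multiplication by pi^n *)
Definition shift (n : int) (x : vec) : vec := fun r i => x r (i - n).

(* exponent of pi on the r-th basis vector of the lattice [j,k] *)
Definition dexp (j k : nat) (r : 'I_3) : int :=
  match val r with 0%N => 0 | 1%N => j%:Z | _ => k%:Z end.

(* the O_oo-lattice spanned by e1, pi^j e2, pi^k e3 *)
Definition lat (j k : nat) : lattice :=
  fun x => forall r i, i < dexp j k r -> x r i = 0.

Definition sameset (L1 L2 : lattice) := forall y, L1 y <-> L2 y.
Definition ssup (L1 L2 : lattice) :=
  (forall y, L2 y -> L1 y) /\ exists y, L1 y /\ ~ L2 y.

Definition img (g : 'M[{poly F}]_3) (L : lattice) : lattice :=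
  fun y => exists x, L x /\ y = mxact g x.
Definition homot (n : int) (L : lattice) : lattice :=
  fun y => exists x, L x /\ y = shift n x.

Definition maps_to (g : 'M[{poly F}]_3) (v v' : nat * nat) :=
  exists n : int, sameset (img g (lat v.1 v.2)) (homot n (lat v'.1 v'.2)).

Definition GL3A (g : 'M[{poly F}]_3) := g \in unitmx.

Definition stab_vertex (j k : nat) (g : 'M[{poly F}]_3) :=
  GL3A g /\ maps_to g (j, k) (j, k).

Definition stab_simplex (w : seq (nat * nat)) (g : 'M[{poly F}]_3) :=
  GL3A g /\ forall v, v \in w -> exists2 v', v' \in w & maps_to g v v'.

Definition pr (g : 'M[{poly F}]_3) : 'M[F]_3 := map_mx (fun p => p.[0]) g.

Definition pr_stab (j k : nat) (h : 'M[F]_3) :=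
  exists g, stab_vertex j k g /\ pr g = h.

(* w (list of distinct vertices [j,k]) is a simplex: for some ordering of
   its vertices and some representatives L_0 ⊋ L_1 ⊋ ... ⊋ L_m ⊋ pi L_0. *)
Definition is_simplex (w : seq (nat * nat)) :=
  uniq w /\
  exists (s : seq (nat * nat)) (ns : seq int),
    perm_eq s w /\ size ns = size s /\
    let Ls := fun i => homot (nth 0 ns i) (lat (nth (0%N, 0%N) s i).1
                                                 (nth (0%N, 0%N) s i).2) in
    (forall i, (i.+1 < size s)%N -> ssup (Ls i) (Ls i.+1)) /\
    ssup (Ls (size s).-1) (homot 1 (Ls 0%N)).

Definition i0 : 'I_3 := @Ordinal 3 0 isT.
Definition i1 : 'I_3 := @Ordinal 3 1 isT.
Definition i2 : 'I_3 := @Ordinal 3 2 isT.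

Definition inB (h : 'M[F]_3) :=
  h \in unitmx /\ h i1 i0 = 0 /\ h i2 i0 = 0 /\ h i2 i1 = 0.
Definition inP0 (h : 'M[F]_3) := h \in unitmx /\ h i2 i0 = 0 /\ h i2 i1 = 0.
Definition inP2 (h : 'M[F]_3) := h \in unitmx /\ h i1 i0 = 0 /\ h i2 i0 = 0.

End Defs.

From mathcomp Require Import all_boot all_order all_algebra fingroup perm finalg.
From mathcomp Require Import zify ring.
From Stdlib Require Import FunctionalExtensionality.
Set Implicit Arguments. Unset Strict Implicit. Unset Printing Implicit Defensive.
Import Order.TTheory GRing.Theory Num.Theory FinRing.Theory.
Local Open Scope ring_scope.

(* All lattices involved are diagonal, spanned by pi^(a r) e_r.  If g in
   GL_3(A) maps the diagonal lattice with exponents a onto the one with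
   exponents b, then deg g_rs <= a_s - b_r, and comparing determinants gives
   sum a = sum b.  For a = b = (0, j, k) this forces the homothety factor to
   be trivial and makes pr g block upper triangular for the flag defined by
   a; conversely every invertible block upper triangular constant matrix
   stabilises the lattice.  In a simplex the sums j + k + 3n of the
   representatives strictly increase within a window of length 3, so the
   classes of j + k mod 3 of its vertices are pairwise distinct; as this
   class is invariant under GL_3(A), a setwise stabiliser fixes every
   vertex, and the constant lift of h stabilises all of them at once. *)

Lemma unitr_inv_expr (R : finUnitRingType) (x : R) :
  x \is a GRing.unit -> exists n, x^-1 = x ^+ n.
Proof.
move=> ux; exists #[FinRing.unit R ux]%g.-1.
by rewrite -[x]/(val (FinRing.unit R ux)) -val_unitV invg_expg val_unitX.
Qed.

Lemma incr_window_inj (V : nat -> int) (N : nat) (m : int) i j :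
  (forall i, (i.+1 < N)%N -> V i < V i.+1) -> V N.-1 < V 0%N + m ->
  (i < N)%N -> (j < N)%N -> (exists q, V i = V j + q * m) -> i = j.
Proof.
move=> incrV window iN jN [q Vij].
pose D := [pred k | (k < N)%N].
have convex : {in D &, forall i j k, (i < k < j)%N -> k \in D}.
  by move=> a b _ bN k /andP[_ kb]; rewrite !inE in bN *; exact: ltn_trans kb bN.
have monoV := Order.NatMonotonyTheory.incn_inP convex (fun i _ => incrV i).
have N0 : (0 < N)%N by apply: leq_ltn_trans iN.
have NN : N.-1 \in D by rewrite inE prednK.
have bounds k : (k < N)%N -> V 0%N <= V k <= V N.-1.
  by move=> kN; rewrite !monoV ?inE // !leEnat leq0n -ltnS prednK.
have /andP[Vi0 ViN] := bounds i iN; have /andP[Vj0 VjN] := bounds j jN.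
have q0 : q = 0 by nia.
move: Vij; rewrite q0 mul0r addr0 => Vij.
by apply/eqP; rewrite eqn_leq -!leEnat -!monoV ?inE // Vij lexx.
Qed.

Section PolyAction.
Variable F : finFieldType.

Lemma polyact_widen (p : {poly F}) z i N : (size p <= N)%N ->
  polyact p z i = \sum_(m < N) p`_m * z (i + (m : nat)%:Z).
Proof.
move=> pN; rewrite /polyact (big_ord_widen N (fun m => p`_m * z (i + (m : nat)%:Z))) //.
rewrite big_mkcond /=; apply: eq_bigr => m _; case: ltnP => // pm.
by rewrite nth_default // mul0r.
Qed.

Lemma polyact0 z i : polyact (0 : {poly F}) z i = 0.
Proof. by rewrite /polyact size_poly0 big_ord0. Qed.

Lemma polyactD (p q : {poly F}) z i :
  polyact (p + q) z i = polyact p z i + polyact q z i.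
Proof.
set N := maxn (size p) (size q).
rewrite !(@polyact_widen _ _ _ N) ?leq_maxl ?leq_maxr ?(leq_trans (size_polyD _ _)) //.
by rewrite -big_split /=; apply: eq_bigr => m _; rewrite coefD mulrDl.
Qed.

Lemma polyactZ (c : F) (q : {poly F}) z i :
  polyact (c *: q) z i = c * polyact q z i.
Proof.
rewrite !(@polyact_widen _ _ _ (size q)) ?size_scale_leq //.
by rewrite mulr_sumr; apply: eq_bigr => m _; rewrite coefZ mulrA.
Qed.

Lemma polyactC (c : F) z i : polyact c%:P z i = c * z i.
Proof.
rewrite (@polyact_widen _ _ _ 1) ?size_polyC ?leq_b1 //.
by rewrite big_ord1 coefC /= addr0.
Qed.

Lemma polyactXM (q : {poly F}) z i :
  polyact ('X * q) z i = polyact q z (i + 1).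
Proof.
rewrite (@polyact_widen _ _ _ (size q).+1); last first.
  have [->|q0] := eqVneq q 0; first by rewrite mulr0 size_poly0.
  by rewrite mulrC size_mulX.
rewrite big_ord_recl coefXM /= mul0r add0r /polyact.
apply: eq_bigr => m _; rewrite coefXM /=; congr (_ * z _).
rewrite /bump /=; lia.
Qed.

Lemma polyactM (p q : {poly F}) z i :
  polyact (p * q) z i = polyact p (polyact q z) i.
Proof.
elim/poly_ind: p q z i => [|p c IHp] q z i; first by rewrite mul0r !polyact0.
have -> : (p * 'X + c%:P) * q = p * ('X * q) + c *: q by rewrite -mul_polyC; ring.
rewrite polyactD polyactZ IHp polyactD polyactC.
have -> : polyact ('X * q) z = fun k => polyact q z (k + 1).
  by apply: functional_extensionality => k; rewrite polyactXM.
congr (_ + _); rewrite mulrC polyactXM.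
by apply: eq_bigr => m _; rewrite addrAC.
Qed.

Lemma polyact_sum n (f : 'I_n -> int -> F) (p : {poly F}) i :
  polyact p (fun k => \sum_(s < n) f s k) i = \sum_(s < n) polyact p (f s) i.
Proof.
rewrite /polyact; under eq_bigr do rewrite mulr_sumr.
by rewrite exchange_big.
Qed.

Lemma polyact_sum_poly n (P : 'I_n -> {poly F}) z i :
  polyact (\sum_(t < n) P t) z i = \sum_(t < n) polyact (P t) z i.
Proof.
apply: (big_morph (fun p => polyact p z i)); last exact: polyact0.
by move=> ? ?; rewrite polyactD.
Qed.

Lemma mxactM (g h : 'M[{poly F}]_3) x : mxact g (mxact h x) = mxact (g * h) x.
Proof.
apply: functional_extensionality => r; apply: functional_extensionality => i.
rewrite /mxact; under eq_bigr do rewrite polyact_sum.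
rewrite exchange_big /=; apply: eq_bigr => s _.
by rewrite mxE polyact_sum_poly; apply: eq_bigr => t _; rewrite polyactM.
Qed.

Lemma mxact_scalar (c : F) x : mxact (c%:P)%:M x = fun r i => c * x r i.
Proof.
apply: functional_extensionality => r; apply: functional_extensionality => i.
rewrite /mxact (bigD1 r) //= big1 ?addr0 => [|s /negPf sr]; rewrite mxE.
  by rewrite eqxx mulr1n polyactC.
by rewrite eq_sym sr mulr0n polyact0.
Qed.

Lemma mxact_polyC (h : 'M[F]_3) x :
  mxact (map_mx polyC h) x = fun r i => \sum_(s < 3) h r s * x s i.
Proof.
apply: functional_extensionality => r; apply: functional_extensionality => i.
by apply: eq_bigr => s _; rewrite mxE polyactC.
Qed.

End PolyAction.

Section DiagonalLattices.
Variable F : finFieldType.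

Definition diag_lat (a : 'I_3 -> int) : lattice F :=
  fun x => forall r i, i < a r -> x r i = 0.

Definition basis_vec (s : 'I_3) (e : int) : vec F :=
  fun r i => if (r == s) && (i == e) then 1 else 0.

(* For [e < 0] this forces [p = 0]. *)
Definition deg_le (p : {poly F}) (e : int) := forall m : nat, e < m%:Z -> p`_m = 0.

Lemma basis_vec_diag_lat a s : diag_lat a (basis_vec s (a s)).
Proof.
move=> r i ira; rewrite /basis_vec; case: (r =P s) => //= rs; subst r.
by case: (i =P a s) ira => // ->; rewrite ltxx.
Qed.

Lemma mxact_basis_vec (g : 'M[{poly F}]_3) r s e (m : nat) :
  mxact g (basis_vec s e) r (e - m%:Z) = (g r s)`_m.
Proof.
rewrite /mxact (bigD1 s) //= big1 ?addr0 => [|t ts]; last first.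
  by rewrite /polyact big1 // => k _; rewrite /basis_vec (negPf ts) mulr0.
rewrite /polyact /basis_vec eqxx /=; case: (ltnP m (size (g r s))) => [mg|gm].
  rewrite (bigD1 (Ordinal mg)) //= big1 ?addr0 => [|k km].
    by rewrite subrK eqxx mulr1.
  case: eqP; rewrite ?mulr0 // => E; case/eqP: km; apply: val_inj => /=; lia.
rewrite nth_default // big1 // => k _; case: eqP; rewrite ?mulr0 // => E.
by have := leq_trans (ltn_ord k) gm; lia.
Qed.

Lemma mxact_diag_lat_deg_le (g : 'M[{poly F}]_3) a b :
  (forall x, diag_lat a x -> diag_lat b (mxact g x)) ->
  forall r s, deg_le (g r s) (a s - b r).
Proof.
move=> gab r s m mab; rewrite -(mxact_basis_vec g r s (a s) m).
by apply: gab; [exact: basis_vec_diag_lat | lia].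
Qed.

Lemma deg_le_polyC (c : F) : deg_le c%:P 0.
Proof. by move=> m m0; rewrite coefC; case: eqP => // E; lia. Qed.

Lemma deg_le_polyC_ge0 (c : F) e : c != 0 -> deg_le c%:P e -> 0 <= e.
Proof.
move=> c0 ce; case: (lerP 0 e) => // e0.
by have := ce 0%N e0; rewrite coefC eqxx => c_eq0; rewrite c_eq0 eqxx in c0.
Qed.

Lemma deg_leM (p q : {poly F}) e1 e2 :
  deg_le p e1 -> deg_le q e2 -> deg_le (p * q) (e1 + e2).
Proof.
move=> pe1 qe2 m me; rewrite coefM big1 // => l _.
case: (ltP e1 (l : nat)%:Z) => le1; first by rewrite pe1 ?mul0r.
by have := ltn_ord l; rewrite qe2 ?mulr0 //; lia.
Qed.

Lemma deg_le_prod n (P : 'I_n -> {poly F}) (E : 'I_n -> int) :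
  (forall i, deg_le (P i) (E i)) -> deg_le (\prod_i P i) (\sum_i E i).
Proof.
move=> PE; apply: (big_rec2 (fun e p => deg_le p e)).
  by rewrite -polyC1; exact: deg_le_polyC.
by move=> i e p _; apply: deg_leM.
Qed.

(* Every term of the Leibniz expansion has degree at most sum x - sum y. *)
Lemma det_deg_le n (A : 'M[{poly F}]_n) (x y : 'I_n -> int) :
  (forall i j, deg_le (A i j) (x j - y i)) ->
  deg_le (\det A) (\sum_i x i - \sum_i y i).
Proof.
move=> Axy; apply: (big_ind (fun p => deg_le p _)).
- by move=> m _; rewrite coef0.
- by move=> p q pe qe m me; rewrite coefD pe ?qe ?addr0.
move=> s _; rewrite -(add0r (_ - _)); apply: deg_leM.
  by rewrite -(rmorph_sign polyC); exact: deg_le_polyC.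
have -> : \sum_i x i - \sum_i y i = \sum_i (x (s i) - y i).
  by rewrite sumrB (reindex_inj (@perm_inj _ s)).
by apply: deg_le_prod => i; apply: Axy.
Qed.

Lemma GL3A_detC (g : 'M[{poly F}]_3) :
  GL3A g -> exists2 c : F, c != 0 & \det g = c%:P.
Proof.
rewrite /GL3A unitmxE poly_unitE => /andP[/eqP size_det unit_det].
exists (\det g)`_0; first by rewrite -unitfE.
by apply: size1_polyC; rewrite size_det.
Qed.

Lemma sum_ord3 (a : 'I_3 -> int) : \sum_i a i = a i0 + a i1 + a i2.
Proof.
rewrite !big_ord_recr big_ord0 /= add0r.
by congr (_ + _ + _); apply: congr1; apply: val_inj.
Qed.

Lemma ord3_ind (P : 'I_3 -> Prop) : P i0 -> P i1 -> P i2 -> forall r, P r.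
Proof.
move=> P0 P1 P2 [[|[|[|//]]] r3].
- by rewrite (_ : Ordinal r3 = i0) //; apply: val_inj.
- by rewrite (_ : Ordinal r3 = i1) //; apply: val_inj.
- by rewrite (_ : Ordinal r3 = i2) //; apply: val_inj.
Qed.

Lemma GL3A_img_diag_lat (g : 'M[{poly F}]_3) a b :
  GL3A g -> sameset (img g (diag_lat a)) (diag_lat b) ->
  \sum_r a r = \sum_r b r /\ forall r s, deg_le (g r s) (a s - b r).
Proof.
move=> GLg gab.
have deg_g := mxact_diag_lat_deg_le (fun x xa => (gab _).1 (ex_intro _ x (conj xa erefl))).
have [c c0 detg] := GL3A_detC GLg.
have deg_adj : forall r s, deg_le (\adj g r s) (b s - a r).
  apply: mxact_diag_lat_deg_le => y /gab[x [xa ->]].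
  rewrite mxactM -mulmxE mul_adj_mx detg mxact_scalar.
  by move=> r i ira; rewrite xa ?mulr0.
have det_adj : \det (\adj g) = (c ^+ 2)%:P.
  have : \det (\adj g *m g) = \det ((\det g)%:M : 'M_3) by rewrite mul_adj_mx.
  rewrite det_mulmx det_scalar detg => E.
  apply: (mulIf (x := c%:P)); first by rewrite polyC_eq0.
  by rewrite E -polyCM -exprSr rmorphXn.
have := det_deg_le deg_g; rewrite detg => /(deg_le_polyC_ge0 c0).
have := det_deg_le deg_adj; rewrite det_adj => /(deg_le_polyC_ge0 (expf_neq0 2 c0)).
by split => //; lia.
Qed.

Lemma sameset_refl (L : lattice F) : sameset L L.
Proof. by []. Qed.

Lemma sameset_trans (L1 L2 L3 : lattice F) :
  sameset L1 L2 -> sameset L2 L3 -> sameset L1 L3.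
Proof. by move=> h1 h2 y; rewrite h1 h2. Qed.

Lemma homot_diag_lat n a : sameset (homot n (diag_lat a)) (diag_lat (fun r => a r + n)).
Proof.
move=> y; split.
  by case=> x [xa ->] r i ian; rewrite /shift; apply: xa; lia.
move=> yan; exists (shift (- n) y); split.
  by move=> r i ia; rewrite /shift; apply: yan; lia.
apply: functional_extensionality => r; apply: functional_extensionality => i.
by rewrite /shift; congr y; lia.
Qed.

Lemma ssup_diag_lat_sum_lt (L1 L2 : lattice F) a b :
  ssup L1 L2 -> sameset L1 (diag_lat a) -> sameset L2 (diag_lat b) ->
  \sum_r a r < \sum_r b r.
Proof.
move=> [L21 [y [L1y L2y]]] L1a L2b.
have ab r : a r <= b r.
  case: (leP (a r) (b r)) => // bra.
  have : diag_lat a (basis_vec r (b r)) by apply/L1a/L21/L2b/basis_vec_diag_lat.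
  by move/(_ r (b r) bra); rewrite /basis_vec !eqxx => /eqP; rewrite oner_eq0.
rewrite !sum_ord3; move: (ab i0) (ab i1) (ab i2) => ab0 ab1 ab2.
case: (ltP (a i0) (b i0)) => [|ba0]; first lia.
case: (ltP (a i1) (b i1)) => [|ba1]; first lia.
case: (ltP (a i2) (b i2)) => [|ba2]; first lia.
have ba : forall r, b r <= a r by apply: ord3_ind.
by exfalso; apply: L2y; apply/L2b => r i ib; apply: (L1a y).1 L1y r i (lt_le_trans ib (ba r)).
Qed.

End DiagonalLattices.

Section BlockTriangular.
Variable F : finFieldType.

(* For [a = dexp j k] these are the groups GL_3, P_0, P_2 and B of the
   statement. *)
Definition block_triu (a : 'I_3 -> int) (h : 'M[F]_3) :=
  forall r s, a s < a r -> h r s = 0.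

Lemma block_triu1 a : block_triu a 1.
Proof. by move=> r s sr; rewrite mxE; case: eqVneq sr => // ->; rewrite ltxx. Qed.

Lemma block_triuM a (A B : 'M[F]_3) :
  block_triu a A -> block_triu a B -> block_triu a (A * B).
Proof.
move=> triuA triuB r s sr; rewrite -mulmxE mxE big1 // => t _.
case: (ltP (a t) (a r)) => [tr|rt]; first by rewrite triuA ?mul0r.
by rewrite triuB ?mulr0 //; apply: lt_le_trans sr rt.
Qed.

Lemma block_triuV a (h : 'M[F]_3) :
  h \in unitmx -> block_triu a h -> block_triu a (invmx h).
Proof.
move=> h_unit triuh; have [n ->] : exists n, invmx h = h ^+ n := unitr_inv_expr h_unit.
elim: n => [|n IHn]; first by rewrite expr0; apply: block_triu1.
by rewrite exprS; apply: block_triuM.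
Qed.

Lemma block_triu_dexp j k h : (j <= k)%N ->
  block_triu (dexp j k) h <->
  [/\ (0 < j)%N -> h i1 i0 = 0, (0 < k)%N -> h i2 i0 = 0 & (j < k)%N -> h i2 i1 = 0].
Proof.
move=> jk; split=> [triuh | [h10 h20 h21]].
  by split=> ?; apply: triuh; rewrite /dexp /=; lia.
by apply: ord3_ind; apply: ord3_ind; rewrite /dexp /= => ?; lia || by [auto].
Qed.

Lemma pr_polyC (h : 'M[F]_3) : pr (map_mx polyC h) = h.
Proof. by apply/matrixP => r s; rewrite !mxE hornerC. Qed.

Lemma block_triu_img_diag_lat a (h : 'M[F]_3) :
  h \in unitmx -> block_triu a h ->
  sameset (img (map_mx polyC h) (diag_lat a)) (diag_lat a).
Proof.
have preserve (h' : 'M[F]_3) x : block_triu a h' -> diag_lat a x ->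
    diag_lat a (mxact (map_mx polyC h') x).
  move=> triuh' xa r i ir; rewrite mxact_polyC big1 // => s _.
  case: (ltP i (a s)) => [ias|si]; first by rewrite xa ?mulr0.
  by rewrite triuh' ?mul0r //; apply: le_lt_trans si ir.
move=> h_unit triuh y; split=> [[x [xa ->]] | ya]; first exact: preserve.
exists (mxact (map_mx polyC (invmx h)) y); split.
  by apply: preserve => //; apply: block_triuV.
rewrite mxactM -mulmxE -map_mxM mulmxV // map_scalar_mx mxact_scalar.
by apply: functional_extensionality => r; apply: functional_extensionality => i; rewrite mul1r.
Qed.

Lemma stab_diag_lat_pr (g : 'M[{poly F}]_3) a n :
  GL3A g -> sameset (img g (diag_lat a)) (homot n (diag_lat a)) ->
  pr g \in unitmx /\ block_triu a (pr g).
Proof.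
move=> GLg gaa.
have [sum_eq deg_g] := GL3A_img_diag_lat GLg (sameset_trans gaa (homot_diag_lat n a)).
have n0 : n = 0 by move: sum_eq; rewrite !sum_ord3; lia.
split.
  have [c c0 detg] := GL3A_detC GLg.
  by rewrite unitmxE /pr (det_map_mx (horner_eval 0)) /= detg horner_evalE hornerC unitfE.
by move=> r s sr; rewrite /pr mxE horner_coef0; apply: deg_g; lia.
Qed.

Lemma polyC_stab_vertex j k (h : 'M[F]_3) :
  h \in unitmx -> block_triu (dexp j k) h -> stab_vertex j k (map_mx polyC h).
Proof.
move=> h_unit triuh; split; first by rewrite /GL3A map_unitmx.
exists 0 => y; rewrite (block_triu_img_diag_lat h_unit triuh y) (homot_diag_lat 0 _ y).
by split=> ya r i ir; apply: ya; rewrite ?addr0 in ir *.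
Qed.

Lemma pr_stabP j k (h : 'M[F]_3) :
  pr_stab j k h <-> h \in unitmx /\ block_triu (dexp j k) h.
Proof.
split=> [[g [[GLg [n gjk]] <-]] | [h_unit triuh]]; first exact: stab_diag_lat_pr gjk.
by exists (map_mx polyC h); split; [apply: polyC_stab_vertex | apply: pr_polyC].
Qed.

End BlockTriangular.

Section Simplices.
Variable F : finFieldType.

Lemma homot_homot m n (L : lattice F) :
  sameset (homot m (homot n L)) (homot (n + m) L).
Proof.
have shift_shift x : shift m (shift n x) = shift (n + m) x.
  apply: functional_extensionality => r; apply: functional_extensionality => i.
  by rewrite /shift; congr x; lia.
move=> y; split=> [[_ [[x [Lx ->]] ->]] | [x [Lx ->]]].
  by exists x; rewrite shift_shift.
by exists (shift n x); split; [exists x | rewrite shift_shift].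
Qed.

(* [j + k + 3 n] is the sum of the exponents of [pi^n [j, k]]. *)
Lemma ssup_homot_lat_lt (L1 L2 : lattice F) j k n j' k' n' :
  ssup L1 L2 -> sameset L1 (homot n (lat j k)) -> sameset L2 (homot n' (lat j' k')) ->
  j%:Z + k%:Z + n * 3 < j'%:Z + k'%:Z + n' * 3.
Proof.
move=> L12 L1jk L2jk.
have := ssup_diag_lat_sum_lt L12 (sameset_trans L1jk (homot_diag_lat _ _))
  (sameset_trans L2jk (homot_diag_lat _ _)).
by rewrite !sum_ord3 /dexp /=; lia.
Qed.

Lemma maps_to_sum_mod3 (g : 'M[{poly F}]_3) v v' :
  GL3A g -> maps_to g v v' -> exists n : int, v.1%:Z + v.2%:Z = v'.1%:Z + v'.2%:Z + n * 3.
Proof.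
move=> GLg [n gvv']; exists n.
have [+ _] := GL3A_img_diag_lat GLg (sameset_trans gvv' (homot_diag_lat n _)).
by rewrite !sum_ord3 /dexp /=; lia.
Qed.

Lemma simplex_maps_to_eq (w : seq (nat * nat)) (g : 'M[{poly F}]_3) v v' :
  is_simplex F w -> GL3A g -> v \in w -> v' \in w -> maps_to g v v' -> v = v'.
Proof.
move=> [_ [s [ns [perm_sw [_ [chain wrap]]]]]] GLg vw v'w gvv'.
pose V i := (nth (0%N, 0%N) s i).1%:Z + (nth (0%N, 0%N) s i).2%:Z + nth 0 ns i * 3.
have incrV i : (i.+1 < size s)%N -> V i < V i.+1.
  by move=> /chain /ssup_homot_lat_lt; apply; apply: sameset_refl.
have windowV : V (size s).-1 < V 0%N + 3.
  by have := ssup_homot_lat_lt wrap (sameset_refl _) (homot_homot _ _ _); rewrite /V; lia.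
have vs : v \in s by rewrite (perm_mem perm_sw).
have v's : v' \in s by rewrite (perm_mem perm_sw).
have [n sum_vv'] := maps_to_sum_mod3 GLg gvv'.
suff idx_vv' : index v s = index v' s.
  by rewrite -(nth_index (0%N, 0%N) vs) -(nth_index (0%N, 0%N) v's) idx_vv'.
apply: (incr_window_inj incrV windowV); rewrite ?index_mem //.
by exists (n + nth 0 ns (index v s) - nth 0 ns (index v' s)); rewrite /V !nth_index //; lia.
Qed.

Lemma pr_stab_simplexP (w : seq (nat * nat)) (h : 'M[F]_3) :
  (0 < size w)%N -> is_simplex F w ->
  (exists g, stab_simplex w g /\ pr g = h) <-> (forall v, v \in w -> pr_stab v.1 v.2 h).
Proof.
move=> size_w simplex_w; split=> [[g [[GLg stab_w] <-]] v vw | pr_w].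
  have [v' v'w gvv'] := stab_w v vw.
  have vv' := simplex_maps_to_eq simplex_w GLg vw v'w gvv'; subst v'.
  by exists g; case: v {vw v'w} gvv' => j k gjk.
case: w size_w simplex_w pr_w => [|v0 w] // _ _ pr_w.
have [h_unit _] := (pr_stabP _ _ _).1 (pr_w v0 (mem_head _ _)).
exists (map_mx polyC h); split; last exact: pr_polyC.
split=> [|v vw]; first by rewrite /GL3A map_unitmx.
have [_ triuh] := (pr_stabP _ _ _).1 (pr_w v vw).
by exists v => //; case: (polyC_stab_vertex h_unit triuh).
Qed.

End Simplices.

Theorem corollary2p10 (F : finFieldType) :
  (forall h : 'M[F]_3, pr_stab 0 0 h <-> h \in unitmx) /\
  (forall k : nat, (0 < k)%N -> forall h : 'M[F]_3, pr_stab 0 k h <-> inP0 h) /\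
  (forall j : nat, (0 < j)%N -> forall h : 'M[F]_3, pr_stab j j h <-> inP2 h) /\
  (forall j k : nat, (0 < j)%N -> (j < k)%N ->
     forall h : 'M[F]_3, pr_stab j k h <-> inB h) /\
  (forall w : seq (nat * nat),
     (2 <= size w)%N -> all (fun v => (v.1 <= v.2)%N) w -> is_simplex F w ->
     forall h : 'M[F]_3,
       (exists g, stab_simplex w g /\ pr g = h) <->
       (forall v, v \in w -> pr_stab v.1 v.2 h)).
Proof.
split; [|split; [|split; [|split]]].
- move=> h; rewrite pr_stabP block_triu_dexp //.
  by split=> [[] | h_unit] //; split.
- move=> k k0 h; rewrite pr_stabP block_triu_dexp // /inP0.
  split=> [[h_unit [_ h20 h21]] | [h_unit [h20 h21]]].
    by split; [|split; [exact: h20 | exact: h21]].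
  by split; [|split=> [//|_|_]].
- move=> j j0 h; rewrite pr_stabP block_triu_dexp // /inP2 ltnn.
  split=> [[h_unit [h10 h20 _]] | [h_unit [h10 h20]]].
    by split; [|split; [exact: h10 | exact: h20]].
  by split; [|split=> [_|_|//]].
- move=> j k j0 jk h; rewrite pr_stabP (block_triu_dexp _ (ltnW jk)) /inB.
  have k0 := ltn_trans j0 jk.
  split=> [[h_unit [h10 h20 h21]] | [h_unit [h10 [h20 h21]]]].
    by split; [|split; [exact: h10 | split; [exact: h20 | exact: h21]]].
  by split; [|split=> _].
move=> w size_w _ simplex_w h; exact: pr_stab_simplexP (ltnW size_w) simplex_w.
Qed.
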